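(* Let $\mathbb{R}^{2n}$ have coordinates $(x_1,y_1,\dots,x_n,y_n)$. For a symplectic form $\omega = \sum_{i=1}^n f_i(x_i,y_i)\,dx_i\wedge dy_i$ with $f_i:\mathbb{R}^2\to\mathbb{R}$ smooth and nowhere vanishing, define for $x\in\mathbb{R}^{2n}$: $m_\omega(x) = \min\{f_i(x_i,y_i) : 1\le i\le n\}$ and $M_\omega(x) = \max\{f_i(x_i,y_i) : 1\le i\le n\}$. Let $\omega_1 = \sum_{i=1}^n f_i(x_i,y_i)\,dx_i\wedge dy_i$ and $\omega_2 = \sum_{i=1}^n g_i(x_i,y_i)\,dx_i\wedge dy_i$ be two such forms (all $f_i,g_i$ smooth and nowhere vanishing). If $\omega_1$ and $\omega_2$ are $\omega_{\mathrm{std}}$-symplectomorphic, then $\inf_{x}m_{\omega_1}(x) = \inf_x m_{\omega_2}(x)$, $\sup_x m_{\omega_1}(x) = \sup_x m_{\omega_2}(x)$, $\inf_x M_{\omega_1}(x) = \inf_x M_{\omega_2}(x)$, and $\sup_x M_{\omega_1}(x) = \sup_x M_{\omega_2}(x)$, where $x$ ranges over $\mathbb{R}^{2n}$ (values in the extended reals).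
   Context: $\omega_{\mathrm{std}} = \sum_{i=1}^n dx_i\wedge dy_i$. $\operatorname{Symp}(\mathbb{R}^{2n},\omega_{\mathrm{std}})$ is the set of diffeomorphisms $\varphi$ of $\mathbb{R}^{2n}$ with $\varphi^*\omega_{\mathrm{std}} = \omega_{\mathrm{std}}$, where $(\varphi^*\omega)(x)(v,w) = \omega(\varphi(x))(d\varphi_x v, d\varphi_x w)$. Symplectic forms $\omega_1,\omega_2$ are $\omega_{\mathrm{std}}$-symplectomorphic if there is $\varphi\in\operatorname{Symp}(\mathbb{R}^{2n},\omega_{\mathrm{std}})$ with $\varphi^*\omega_1 = \omega_2$. *)

From HB Require Import structures.
From mathcomp Require Import all_boot all_order all_algebra.
From mathcomp Require Import all_classical all_reals all_analysis.
Set Implicit Arguments. Unset Strict Implicit. Unset Printing Implicit Defensive.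
Import Order.TTheory GRing.Theory Num.Theory.
Import numFieldNormedType.Exports.
Local Open Scope classical_set_scope.
Local Open Scope ring_scope.

Definition iterD {R : realType} {V W : normedModType R} (vs : seq V)
  (f : V -> W) : V -> W :=
  foldr (fun v g => fun x => derive g x v) f vs.

Definition smooth {R : realType} {V W : normedModType R} (f : V -> W) : Prop :=
  forall vs : seq V, continuous (iterD vs f) /\
    (forall (v x : V), derivable (iterD vs f) x v).

Definition diffeo {R : realType} {V : normedModType R} (phi : V -> V) : Prop :=
  smooth phi /\ exists psi : V -> V, [/\ smooth psi, cancel phi psi & cancel psi phi].

(* R^{2n} is 'rV[R]_(n + n): the coordinate x_i is entry (lshift n i),
   the coordinate y_i is entry (rshift n i). *)
Definition xc {R : realType} {n : nat} (p : 'rV[R]_(n + n)) (i : 'I_n) : R :=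
  p 0 (lshift n i).
Definition yc {R : realType} {n : nat} (p : 'rV[R]_(n + n)) (i : 'I_n) : R :=
  p 0 (rshift n i).

(* A (pointwise) 2-form on R^{2n}: point -> vector -> vector -> R. *)
Definition form2 (R : realType) (n : nat) :=
  'rV[R]_(n + n) -> 'rV[R]_(n + n) -> 'rV[R]_(n + n) -> R.

Definition split_form {R : realType} {n : nat} (f : 'I_n -> R * R -> R) : form2 R n :=
  fun p v w => \sum_(i < n) f i (xc p i, yc p i) * (xc v i * yc w i - yc v i * xc w i).

Definition omega_std {R : realType} {n : nat} : form2 R n :=
  split_form (fun _ _ => 1).

Definition pullback {R : realType} {n : nat} (phi : 'rV[R]_(n + n) -> 'rV[R]_(n + n))
  (om : form2 R n) : form2 R n :=
  fun p v w => om (phi p) ('D_v phi p) ('D_w phi p).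

Definition symp_std {R : realType} {n : nat} (phi : 'rV[R]_(n + n) -> 'rV[R]_(n + n)) :=
  diffeo phi /\ pullback phi omega_std = omega_std.

Definition std_symplectomorphic {R : realType} {n : nat} (om1 om2 : form2 R n) :=
  exists phi, symp_std phi /\ pullback phi om1 = om2.

Definition m_om {R : realType} {n : nat} (f : 'I_n -> R * R -> R)
  (p : 'rV[R]_(n + n)) : \bar R :=
  \big[Order.min/+oo%E]_(i < n) (f i (xc p i, yc p i))%:E.
Definition M_om {R : realType} {n : nat} (f : 'I_n -> R * R -> R)
  (p : 'rV[R]_(n + n)) : \bar R :=
  \big[Order.max/-oo%E]_(i < n) (f i (xc p i, yc p i))%:E.

Definition admissible {R : realType} {n : nat} (f : 'I_n -> R * R -> R) :=
  forall i, smooth (f i) /\ forall q, f i q != 0.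

From HB Require Import structures.
From mathcomp Require Import all_boot all_order all_algebra.
From mathcomp Require Import all_classical all_reals all_analysis.
Import Order.TTheory GRing.Theory Num.Theory.
Import numFieldNormedType.Exports.
Set Implicit Arguments.
Unset Strict Implicit.
Unset Printing Implicit Defensive.
Local Open Scope classical_set_scope.
Local Open Scope ring_scope.

(* Let phi be the symplectomorphism and p a point.  The map v |-> 'D_v phi p
   preserves omega_std; since omega_std is nondegenerate this alone forces it
   to be an invertible linear map (only directional derivatives are assumed to
   exist, so linearity cannot be taken for granted).  It carries omega_g(p) to
   omega_f(phi p).  The coefficients g_i(p) are exactly the eigenvalues of
   omega_g(p) relative to omega_std, i.e. the l with
   omega_g(v, .) = l omega_std(v, .) for some v <> 0, and relative eigenvalues
   are invariant under linear isomorphisms.  Hence {g_i(p)} = {f_i(phi p)}, so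
   m_g = m_f o phi and M_g = M_f o phi, and the ranges agree because phi is
   onto. *)

Lemma form_isometry_unitmx (R : fieldType) m (J : 'M[R]_m)
    (T : 'rV[R]_m -> 'rV[R]_m) :
  J \in unitmx ->
  (forall v w, (T v *m J *m (T w)^T) 0 0 = (v *m J *m w^T) 0 0) ->
  exists2 A, A \in unitmx & forall v, T v = v *m A.
Proof.
move=> Ju TJ; pose A : 'M[R]_m := \matrix_i T (delta_mx 0 i).
have TJA v : T v *m J *m A^T = v *m J.
  apply/rowP => k; have := TJ v (delta_mx 0 k).
  rewrite trmx_delta -colE [in RHS]mxE => <-.
  by rewrite !mxE; apply: eq_bigr => j _; rewrite !mxE.
have AJA : A *m J *m A^T = J.
  by apply/row_matrixP => i; rewrite !row_mul rowK TJA rowE.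
pose B := J *m A^T *m invmx J.
have AB : A *m B = 1%:M by rewrite /B !mulmxA AJA mulmxV.
have TB v : T v *m B = v by rewrite /B !mulmxA TJA mulmxK.
have [Au _] := mulmx1_unit AB.
by exists A => // v; rewrite -[LHS]mulmx1 -(mulmx1C AB) mulmxA TB.
Qed.

Definition rel_eigenvalue (R : fieldType) m
    (om1 om0 : 'rV[R]_m -> 'rV[R]_m -> R) (l : R) :=
  exists2 v, v != 0 & forall w, om1 v w = l * om0 v w.

Lemma rel_eigenvalue_mulmx (R : fieldType) m (A : 'M[R]_m)
    (om1 om0 om1' om0' : 'rV[R]_m -> 'rV[R]_m -> R) (l : R) :
  A \in unitmx ->
  (forall v w, om1' (v *m A) (w *m A) = om1 v w) ->
  (forall v w, om0' (v *m A) (w *m A) = om0 v w) ->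
  rel_eigenvalue om1 om0 l -> rel_eigenvalue om1' om0' l.
Proof.
move=> Au om1A om0A [v v0 omv]; exists (v *m A).
  by apply: contra v0 => /eqP vA0; rewrite -(mulmxK Au v) vA0 mul0mx.
by move=> w; rewrite -(mulmxKV Au w) om1A om0A.
Qed.

Lemma rel_eigenvalue_unitmx (R : fieldType) m (A : 'M[R]_m)
    (om1 om0 om1' om0' : 'rV[R]_m -> 'rV[R]_m -> R) :
  A \in unitmx ->
  (forall v w, om1' (v *m A) (w *m A) = om1 v w) ->
  (forall v w, om0' (v *m A) (w *m A) = om0 v w) ->
  rel_eigenvalue om1' om0' = rel_eigenvalue om1 om0.
Proof.
move=> Au om1A om0A; apply/seteqP; split => l.
  2: exact: rel_eigenvalue_mulmx Au om1A om0A.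
have Au' : invmx A \in unitmx by rewrite unitmx_inv.
apply: (rel_eigenvalue_mulmx Au') => v w.
  by rewrite -[in RHS](mulmxKV Au v) -[in RHS](mulmxKV Au w) om1A.
by rewrite -[in RHS](mulmxKV Au v) -[in RHS](mulmxKV Au w) om0A.
Qed.

Lemma eq_bigmin_range d (T : orderType d) (I J : finType) (x : T)
    (F : I -> T) (G : J -> T) :
  range F = range G -> \big[Order.min/x]_i F i = \big[Order.min/x]_j G j.
Proof.
have le_range (I' J' : finType) (F' : I' -> T) (G' : J' -> T) :
    range G' `<=` range F' ->
    (\big[Order.min/x]_i F' i <= \big[Order.min/x]_j G' j)%O.
  move=> GF; apply: le_bigmin => [|j _]; first exact: bigmin_le_id.
  by have [i _ <-] := GF _ (imageT G' j); exact: bigmin_le.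
by move=> FG; apply/le_anti; rewrite !le_range // FG.
Qed.

Lemma eq_bigmax_range d (T : orderType d) (I J : finType) (x : T)
    (F : I -> T) (G : J -> T) :
  range F = range G -> \big[Order.max/x]_i F i = \big[Order.max/x]_j G j.
Proof.
have le_range (I' J' : finType) (F' : I' -> T) (G' : J' -> T) :
    range F' `<=` range G' ->
    (\big[Order.max/x]_i F' i <= \big[Order.max/x]_j G' j)%O.
  move=> FG; apply: bigmax_le => [|i _]; first exact: bigmax_ge_id.
  by have [j _ <-] := FG _ (imageT F' i); exact: le_bigmax.
by move=> FG; apply/le_anti; rewrite !le_range // FG.
Qed.

Definition symp_mx (R : realType) n : 'M[R]_(n + n) :=
  block_mx 0 1%:M (- 1%:M) 0.

Lemma symp_mx_unit (R : realType) n : symp_mx R n \in unitmx.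
Proof.
suff JJ : symp_mx R n *m - symp_mx R n = 1%:M by case: (mulmx1_unit JJ).
rewrite mulmxN /symp_mx mulmx_block !mulmx0 !mul0mx !mulmx1 !addr0 !add0r.
by rewrite (scalar_mx_block n n 1) opp_block_mx mulmxN mulmx1 !oppr0 !opprK.
Qed.

Lemma omega_stdE (R : realType) n (q v w : 'rV[R]_(n + n)) :
  omega_std q v w = (v *m symp_mx R n *m w^T) 0 0.
Proof.
have -> : v *m symp_mx R n = row_mx (- rsubmx v) (lsubmx v).
  rewrite -{1}[v]hsubmxK /symp_mx mul_row_block !mulmx0 mulmxN !mulmx1.
  by rewrite sub0r addr0.
rewrite -[w in RHS]hsubmxK tr_row_mx mul_row_col mxE !mxE addrC -big_split /=.
by apply: eq_bigr => i _; rewrite !mxE /xc /yc mul1r mulNr.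
Qed.

Section SplitForm.
Variables (R : realType) (n : nat).
Implicit Types (h : 'I_n -> R * R -> R) (q v w : 'rV[R]_(n + n)).

Definition coeff h q (i : 'I_n) : R := h i (xc q i, yc q i).

Let ex (i : 'I_n) : 'rV[R]_(n + n) := delta_mx 0 (lshift n i).
Let ey (i : 'I_n) : 'rV[R]_(n + n) := delta_mx 0 (rshift n i).

Lemma xc_ex i j : xc (ex i) j = (j == i)%:R.
Proof. by rewrite /xc mxE eqxx eq_lshift. Qed.
Lemma yc_ex i j : yc (ex i) j = 0.
Proof. by rewrite /yc mxE eq_rlshift andbF. Qed.
Lemma xc_ey i j : xc (ey i) j = 0.
Proof. by rewrite /xc mxE eq_lrshift andbF. Qed.
Lemma yc_ey i j : yc (ey i) j = (j == i)%:R.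
Proof. by rewrite /yc mxE eqxx eq_rshift. Qed.

Lemma split_form_exl h q i w : split_form h q (ex i) w = coeff h q i * yc w i.
Proof.
rewrite /split_form (bigD1 i) //= xc_ex yc_ex eqxx mul1r mul0r subr0.
rewrite big1 ?addr0 // => j ji.
by rewrite xc_ex yc_ex (negbTE ji) !mul0r subr0 mulr0.
Qed.

Lemma split_form_exr h q i v :
  split_form h q v (ex i) = - (coeff h q i * yc v i).
Proof.
rewrite /split_form (bigD1 i) //= xc_ex yc_ex eqxx mulr1 mulr0 sub0r mulrN.
rewrite big1 ?addr0 // => j ji.
by rewrite xc_ex yc_ex (negbTE ji) !mulr0 subr0 mulr0.
Qed.

Lemma split_form_eyr h q i v : split_form h q v (ey i) = coeff h q i * xc v i.
Proof.
rewrite /split_form (bigD1 i) //= xc_ey yc_ey eqxx mulr1 mulr0 subr0.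
rewrite big1 ?addr0 // => j ji.
by rewrite xc_ey yc_ey (negbTE ji) !mulr0 subr0 mulr0.
Qed.

Lemma range_coeff h q :
  range (coeff h q) = rel_eigenvalue (split_form h q) (omega_std q).
Proof.
apply/seteqP; split => l.
  case=> i _ <-; exists (ex i).
    by apply/rV0Pn; exists (lshift n i); rewrite mxE !eqxx oner_eq0.
  by move=> w; rewrite /omega_std !split_form_exl /coeff mul1r.
case=> v /rV0Pn [k]; case: (split_ordP k) => i -> {k} vi0 vl.
  have := vl (ey i); rewrite /omega_std !split_form_eyr /coeff mul1r.
  by move=> /(mulIf vi0); exists i.
have := vl (ex i); rewrite /omega_std !split_form_exr /coeff mul1r mulrN.
by move=> /oppr_inj /(mulIf vi0); exists i.
Qed.

Lemma symp_range_coeff (phi : 'rV[R]_(n + n) -> 'rV[R]_(n + n)) f g :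
  pullback phi omega_std = omega_std ->
  pullback phi (split_form f) = split_form g ->
  forall p, range (coeff f (phi p)) = range (coeff g p).
Proof.
move=> phi_std phi_fg p; rewrite !range_coeff.
have dphi_std v w :
    omega_std (phi p) ('D_v phi p) ('D_w phi p) = omega_std p v w.
  exact: (congr1 (fun om => om p v w) phi_std).
have dphi_fg v w :
    split_form f (phi p) ('D_v phi p) ('D_w phi p) = split_form g p v w.
  exact: (congr1 (fun om => om p v w) phi_fg).
have [A Au dphiA] : exists2 A, A \in unitmx & forall v, 'D_v phi p = v *m A.
  apply: (form_isometry_unitmx (symp_mx_unit R n)) => v w.
  by rewrite -(omega_stdE (phi p)) -(omega_stdE p) dphi_std.
by apply: rel_eigenvalue_unitmx Au _ _ => v w; rewrite -!dphiA.
Qed.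

Lemma m_om_range f g p q :
  range (coeff f q) = range (coeff g p) -> m_om f q = m_om g p.
Proof.
move=> fg; apply: eq_bigmin_range.
by rewrite -[LHS](image_comp (coeff f q) EFin) fg image_comp.
Qed.

Lemma M_om_range f g p q :
  range (coeff f q) = range (coeff g p) -> M_om f q = M_om g p.
Proof.
move=> fg; apply: eq_bigmax_range.
by rewrite -[LHS](image_comp (coeff f q) EFin) fg image_comp.
Qed.

End SplitForm.

Lemma range_comp_cancel (T U V : Type) (h : U -> V) (phi : T -> U)
    (psi : U -> T) :
  cancel psi phi -> range (h \o phi) = range h.
Proof.
move=> psiK; apply/seteqP; split=> _ [x _ <-]; first by exists (phi x).
by exists (psi x) => //=; rewrite psiK.
Qed.

Theorem theorem2p6 (R : realType) (n : nat) (f g : 'I_n -> R * R -> R) :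
  admissible f -> admissible g ->
  std_symplectomorphic (split_form f) (split_form g) ->
  [/\ ereal_inf (range (m_om f)) = ereal_inf (range (m_om g)),
      ereal_sup (range (m_om f)) = ereal_sup (range (m_om g)),
      ereal_inf (range (M_om f)) = ereal_inf (range (M_om g))
    & ereal_sup (range (M_om f)) = ereal_sup (range (M_om g))].
Proof.
move=> _ _ [phi [[[_ [psi [_ _ psiK]]] phi_std] phi_fg]].
have coeffE := symp_range_coeff phi_std phi_fg.
have mE : m_om f \o phi = m_om g.
  by apply/funext => p; exact: m_om_range (coeffE p).
have ME : M_om f \o phi = M_om g.
  by apply/funext => p; exact: M_om_range (coeffE p).
by rewrite -mE -ME !(range_comp_cancel _ psiK).
Qed.
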